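(* Consider an instance of the submodular partition problem (notation in context) with $m\ge 2$ users, and let $G=\{(u_1,r_1),\dots,(u_n,r_n)\}$ be the output of the GREEDY-M algorithm, where $(u_i,r_i)$ is the pair chosen at iteration $i$, $d_i^p$ the discriminant at iteration $i$ and $c_{u_i}$ the curvature of $Z_{u_i}$. Let $\Omega$ be an optimal partition and assume $Z(\Omega)>0$. Then $$\frac{Z(G)}{Z(\Omega)}\ \ge\ \min\left(1,\ \frac{1}{\max_{1\le i\le n}\left\{c_{u_i}+\frac{1}{d_i^p}\right\}}\right),$$ with the conventions $1/\infty=0$, $1/0=\infty$.
   Context: Submodular partition problem: a finite set of resources $\mathcal{R}$ with $|\mathcal{R}|=n$ and a finite set of users $\mathcal{U}$ with $|\mathcal{U}|=m$; each user $u$ has a monotone submodular $Z_u:2^{\mathcal{R}}\to\mathbb{R}$ with $Z_u(\emptyset)=0$ (monotone: $Z_u(S)\le Z_u(T)$ for $S\subseteq T$; submodular: $Z_u(T\cup\{x\})-Z_u(T)\le Z_u(S\cup\{x\})-Z_u(S)$ for $S\subseteq T$, $x\notin T$). Let $\mathcal{V}=\mathcal{U}\times\mathcal{R}$; for $S\subseteq\mathcal{V}$ let $S_u=\{r:(u,r)\in S\}$ and $Z(S)=\sum_{u\in\mathcal{U}}Z_u(S_u)$. An allocation is $S\subseteq \mathcal{V}$ in which each resource appears in at most one pair; a partition is an allocation in which every resource appears in exactly one pair. $\Omega$ is a partition maximizing $Z$. For $S\subseteq\mathcal{V}$, $\rho^u_r(S)=Z_u(S_u\cup\{r\})-Z_u(S_u)$.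 The curvature of $Z_u$ is $c_u=1-\min\{(Z_u(S\cup\{r\})-Z_u(S))/Z_u(\{r\}): S\subseteq\mathcal{R},\ r\in\mathcal{R}\setminus S,\ Z_u(\{r\})>0\}$. GREEDY-M algorithm: $G^0=\emptyset$; for $i=1,\dots,n$, among pairs $(u,r)$ with $r$ not allocated in $G^{i-1}$, select a pair maximizing $\rho^u_r(G^{i-1})$; if several pairs attain the maximum, select among them one minimizing $c_u+1/d_i(u,r)$, where $d_i(u,r)=\rho^u_r(G^{i-1})/\max_{u'\neq u}\rho^{u'}_r(G^{i-1})$ (set to $\infty$ if the denominator is $0$); remaining ties are broken by a fixed index order of pairs. Call the selected pair $(u_i,r_i)$ and set $G^i=G^{i-1}\cup\{(u_i,r_i)\}$; output $G=G^n$. The discriminant at iteration $i$ is $d_i^p=d_i(u_i,r_i)$. *)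

From HB Require Import structures.
From mathcomp Require Import all_boot all_order all_algebra.
Set Implicit Arguments. Unset Strict Implicit. Unset Printing Implicit Defensive.
Import Order.TTheory GRing.Theory Num.Theory.
Local Open Scope ring_scope.

Section SubmodPartition.
Variables (R : realFieldType) (U Res : finType).
Variable Z : U -> {set Res} -> R.

Definition monotone_fun : Prop :=
  forall u (S T : {set Res}), S \subset T -> Z u S <= Z u T.

Definition submodular_fun : Prop :=
  forall u (S T : {set Res}) (x : Res), S \subset T -> x \notin T ->
    Z u (x |: T) - Z u T <= Z u (x |: S) - Z u S.

Definition normalized_fun : Prop := forall u, Z u set0 = 0.

Definition Su (S : {set U * Res}) (u : U) : {set Res} := [set r | (u, r) \in S].

Definition ZZ (S : {set U * Res}) : R := \sum_(u : U) Z u (Su S u).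

Definition is_partition (S : {set U * Res}) : Prop :=
  forall r : Res, #|[set u | (u, r) \in S]| = 1%N.

Definition rho (S : {set U * Res}) (u : U) (r : Res) : R :=
  Z u (r |: Su S u) - Z u (Su S u).

Definition allocated (S : {set U * Res}) (r : Res) : bool :=
  [exists u, (u, r) \in S].

(* The min is taken with neutral element 1, which does not change its value
   because the term S = set0 equals 1 (Z u set0 = 0).
   Convention when the index set is empty (Z_u({r}) = 0 for all r): c_u = 1. *)
Definition curvature (u : U) : R :=
  if [exists r, 0 < Z u [set r]] then
    1 - \big[Num.min/1]_(S : {set Res})
          \big[Num.min/1]_(r : Res | (r \notin S) && (0 < Z u [set r]))
             ((Z u (r |: S) - Z u S) / Z u [set r])
  else 1.

(* Extended nonnegative values: Some x = x, None = +infinity. *)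
Definition ele (a b : option R) : bool :=
  match a, b with
  | _, None => true
  | None, Some _ => false
  | Some x, Some y => x <= y
  end.

Definition emax (a b : option R) : option R := if ele a b then b else a.

(* 1 / d(u,r) where d(u,r) = rho^u_r / max_{u' <> u} rho^{u'}_r,
   d = infinity if the denominator is 0, with 1/infinity = 0 and 1/0 = infinity.
   (The max is over a nonempty set when #|U| >= 2; all the rho are >= 0 by
   monotonicity, so taking the max with neutral element 0 is harmless.) *)
Definition inv_d (S : {set U * Res}) (u : U) (r : Res) : option R :=
  let den := \big[Num.max/0]_(u' : U | u' != u) rho S u' r in
  if den == 0 then Some 0
  else if rho S u r == 0 then None
  else Some (den / rho S u r).

Definition key (S : {set U * Res}) (p : U * Res) : option R :=
  match inv_d S p.1 p.2 with
  | Some x => Some (curvature p.1 + x)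
  | None => None
  end.

Definition prefix (s : seq (U * Res)) (i : nat) : {set U * Res} :=
  [set x in take i s].

(* s = (s_0,...,s_{n-1}), n = #|Res|, is the run of GREEDY-M (with the fixed index order of pairs given by the
   injective ranking idx): at every iteration i (0-based), the pair s_i is
   selected according to the three rules of the algorithm. *)
Definition greedyM_run (idx : U * Res -> nat) (s : #|Res|.-tuple (U * Res)) : Prop :=
  forall i : 'I_#|Res|,
    let G := prefix s i in
    let p := tnth s i in
    [/\ ~~ allocated G p.2,
        (forall q : U * Res, ~~ allocated G q.2 -> rho G q.1 q.2 <= rho G p.1 p.2),
        (forall q : U * Res, ~~ allocated G q.2 -> rho G q.1 q.2 = rho G p.1 p.2 ->
            ele (key G p) (key G q)) &
        (forall q : U * Res, ~~ allocated G q.2 -> rho G q.1 q.2 = rho G p.1 p.2 ->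
            key G q = key G p -> (idx p <= idx q)%N)].

(* max_i { c_{u_i} + 1/d_i^p } over the iterations (values are >= 0) *)
Definition max_key (s : #|Res|.-tuple (U * Res)) : option R :=
  \big[emax/Some 0]_(i < #|Res|) key (prefix s i) (tnth s i).

(* min(1, 1/M) with 1/infinity = 0 and 1/0 = infinity *)
Definition greedy_bound (M : option R) : R :=
  match M with
  | None => 0
  | Some k => if k == 0 then 1 else Num.min 1 k^-1
  end.

End SubmodPartition.

From HB Require Import structures.
From mathcomp Require Import all_boot all_order all_algebra.
From mathcomp Require Import ring lra.
(* Imported last so that Defs.prefix is not shadowed by seq.prefix. *)
From Pilot Require Import Defs.
Import Order.TTheory GRing.Theory Num.Theory.
Local Open Scope ring_scope.
Set Implicit Arguments. Unset Strict Implicit.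

(* Let M >= 1 bound every key c_{u_i} + 1/d_i^p of the run.  We interpolate
   between the optimum Omega and the greedy output G through the hybrid
   allocations  H_k = G^k  u  { (u,r) in Omega | r not allocated in G^k },
   so that H_0 = Omega and H_n = G.  When iteration k gives resource r_k to
   u_k instead of its Omega-owner w, user u_k gains at least
   (1 - c_{u_k}) rho_k (curvature bound) and w loses at most
   rho^w_{r_k}(G^k) <= rho_k / d_k^p (submodularity + choice of the pair),
   hence  Z(H_{k+1}) >= Z(H_k) - (M - 1) rho_k,  while Z(G^{k+1}) = Z(G^k) + rho_k.
   Telescoping gives  Z(Omega) <= Z(G) + (M - 1) Z(G) = M Z(G), and the
   theorem is the arithmetic reformulation with M = max(1, max_i key_i). *)

Section SetFunctions.
Variables (R : realFieldType) (U Res : finType) (Z : U -> {set Res} -> R).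
Hypotheses (hmono : monotone_fun Z) (hnorm : normalized_fun Z).

Lemma Z_ge0 u S : 0 <= Z u S.
Proof. by rewrite -(hnorm u); apply: hmono; exact: sub0set. Qed.

Lemma marg_ge0 u S r : 0 <= Z u (r |: S) - Z u S.
Proof. by rewrite subr_ge0; apply: hmono; exact: subsetUr. Qed.

Lemma rho_ge0 S u r : 0 <= rho Z S u r.
Proof. exact: marg_ge0. Qed.

Lemma rho_le_single (hsub : submodular_fun Z) S u r : rho Z S u r <= Z u [set r].
Proof.
rewrite /rho; have [r_in | r_out] := boolP (r \in Su S u).
  by rewrite (setUidPr _) ?sub1set // subrr Z_ge0.
by have := @hsub u _ _ r (sub0set (Su S u)) r_out; rewrite setU0 hnorm subr0.
Qed.

Lemma curvature_le1 u : curvature Z u <= 1.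
Proof.
rewrite /curvature; case: ifP => // _; rewrite lerBlDr lerDl.
apply: le_bigmin => // S _; apply: le_bigmin => // r /andP [_ r_pos].
by apply: divr_ge0; [exact: marg_ge0 | exact: ltW].
Qed.

Lemma curvature_marg u (T : {set Res}) r : r \notin T ->
  (1 - curvature Z u) * Z u [set r] <= Z u (r |: T) - Z u T.
Proof.
move=> r_out; have [r_pos | r_npos] := ltrP 0 (Z u [set r]); last first.
  have -> : Z u [set r] = 0 by apply/eqP; rewrite eq_le r_npos Z_ge0.
  by rewrite mulr0 marg_ge0.
rewrite /curvature; have -> : [exists r, 0 < Z u [set r]] by apply/existsP; exists r.
set m := \big[Num.min/1]_(S : {set Res}) _.
have -> : 1 - (1 - m) = m by ring.
rewrite -ler_pdivlMr //; apply: le_trans (bigmin_le _ T _) _.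
by apply: (bigmin_le_cond _ (j := r)); rewrite r_out r_pos.
Qed.

Lemma mem_Su (S : {set U * Res}) u r : (r \in Su S u) = ((u, r) \in S).
Proof. by rewrite inE. Qed.

Lemma ZZ_change_one (S T : {set U * Res}) a :
  (forall u, u != a -> Su T u = Su S u) ->
  ZZ Z T = ZZ Z S + (Z a (Su T a) - Z a (Su S a)).
Proof.
move=> same; rewrite /ZZ (bigD1 a) //= [in RHS](bigD1 a) //=.
rewrite (eq_bigr (fun u => Z u (Su S u))) => [|u /same -> //]; lra.
Qed.

End SetFunctions.

Lemma partition_owner (U Res : finType) (P : {set U * Res}) r :
  is_partition P -> exists w, forall u, ((u, r) \in P) = (u == w).
Proof.
move=> /(_ r) /eqP /cards1P [w ownerE].
by exists w => u; rewrite -in_set1 -ownerE inE.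
Qed.

Section GreedyRun.
Variables (R : realFieldType) (U Res : finType) (Z : U -> {set Res} -> R).
Variables (idx : U * Res -> nat) (s : #|Res|.-tuple (U * Res)).
Hypothesis hrun : greedyM_run Z idx s.

Local Notation n := #|Res|.

Lemma prefix0 : prefix s 0%N = set0.
Proof. by apply/setP => x; rewrite !inE take0. Qed.

Lemma prefixn : prefix s n = [set x in s].
Proof. by rewrite /prefix take_oversize // size_tuple. Qed.

Lemma prefixS (i : 'I_n) : prefix s i.+1 = tnth s i |: prefix s i.
Proof.
apply/setP => x; rewrite /prefix (take_nth (tnth s i)) ?size_tuple //.
by rewrite !inE mem_rcons in_cons -tnth_nth.
Qed.

Lemma allocated0 (r : Res) : allocated (set0 : {set U * Res}) r = false.
Proof. by apply/existsP => -[u]; rewrite inE. Qed.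

Lemma allocated_setU1 p (A : {set U * Res}) r :
  allocated (p |: A) r = (r == p.2) || allocated A r.
Proof.
apply/existsP/orP => [[u]|].
  rewrite !inE => /orP [/eqP <- | uA]; first by left.
  by right; apply/existsP; exists u.
case=> [/eqP -> | /existsP [u uA]].
  by exists p.1; rewrite -surjective_pairing setU11.
by exists u; rewrite inE uA orbT.
Qed.

Lemma mem_prefix (j : 'I_n) k : (j < k)%N -> tnth s j \in prefix s k.
Proof.
move=> jk; rewrite inE (tnth_nth (tnth s j)) -(nth_take _ jk).
apply: mem_nth; rewrite size_take size_tuple.
by case: ifP => // /negbT; rewrite -leqNgt => _; exact: ltn_ord.
Qed.

(* A greedy step only picks unallocated resources, so distinct iterations
   allocate distinct resources. *)
Lemma greedy_resource_inj : injective (fun i : 'I_n => (tnth s i).2).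
Proof.
have later_new (i j : 'I_n) : (j < i)%N -> (tnth s i).2 != (tnth s j).2.
  move=> ji; have [free _ _ _] := hrun i; apply: contraNneq free => ->.
  by apply/existsP; exists (tnth s j).1; rewrite -surjective_pairing mem_prefix.
move=> i j /= eq_r; case: (ltngtP i j) => [ij|ji|/val_inj //].
- by move: (later_new _ _ ij); rewrite eq_r eqxx.
- by move: (later_new _ _ ji); rewrite eq_r eqxx.
Qed.

Lemma prefixn_allocated r : allocated (prefix s n) r.
Proof.
have := inj_card_onto greedy_resource_inj; rewrite card_ord.
move=> /(_ (leqnn _) r) /codomP [i ->]; apply/existsP; exists (tnth s i).1.
by rewrite -surjective_pairing mem_prefix.
Qed.

Hypothesis hmono : monotone_fun Z.

(* Since the greedy pair (a,r) maximizes the marginal gain, 1/d(a,r) is a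
   finite value x that scales rho^a_r up to the gain of every other user. *)
Lemma inv_d_greedy (A : {set U * Res}) a r :
  (forall q : U * Res, ~~ allocated A q.2 -> rho Z A q.1 q.2 <= rho Z A a r) ->
  ~~ allocated A r ->
  exists2 x, inv_d Z A a r = Some x &
    forall u, u != a -> rho Z A u r <= x * rho Z A a r.
Proof.
move=> best free; rewrite /inv_d.
set den := \big[Num.max/0]_(u' : U | u' != a) rho Z A u' r.
have other_le_den u : u != a -> rho Z A u r <= den.
  by move=> ua; exact: (le_bigmax_cond _ (j := u)).
have den_le : den <= rho Z A a r.
  by apply: bigmax_le => [|u _]; [exact: rho_ge0 | exact: (best (u, r))].
have den_ge0 : 0 <= den.
  by rewrite /den; elim/big_ind: _ => // [x y x0 y0|u _]; [rewrite le_max x0 | exact: rho_ge0].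
case: eqP => [den0 | den_n0].
  by exists 0 => // u /other_le_den; rewrite mul0r -den0.
case: eqP => [rho0 | /eqP rho_n0].
  by case: den_n0; apply/eqP; rewrite eq_le den_ge0 -rho0 den_le.
by exists (den / rho Z A a r) => // u /other_le_den; rewrite divfK.
Qed.

End GreedyRun.

Section HybridExchange.
Variables (R : realFieldType) (U Res : finType) (Z : U -> {set Res} -> R).
Hypotheses (hmono : monotone_fun Z) (hsub : submodular_fun Z) (hnorm : normalized_fun Z).
Variable Omega : {set U * Res}.

Definition hybrid (A : {set U * Res}) : {set U * Res} :=
  [set x | (x \in A) || ((x \in Omega) && ~~ allocated A x.2)].

Lemma hybrid_empty : hybrid set0 = Omega.
Proof. by apply/setP => x; rewrite inE allocated0 inE /= andbT. Qed.

Lemma hybrid_full A : (forall r, allocated A r) -> hybrid A = A.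
Proof. by move=> full; apply/setP => x; rewrite inE full andbF orbF. Qed.

Variables (A : {set U * Res}) (a w : U) (r : Res).
Hypotheses (free : ~~ allocated A r) (owner : forall u, ((u, r) \in Omega) = (u == w)).

Local Notation A' := ((a, r) |: A).

Let notin_A u : (u, r) \notin A.
Proof. by apply: contra free => uA; apply/existsP; exists u. Qed.

Let in_hybrid u r' : r' != r -> ((u, r') \in hybrid A') = ((u, r') \in hybrid A).
Proof. by move=> r'r; rewrite !inE allocated_setU1 /= xpair_eqE (negbTE r'r) andbF. Qed.

Let in_hybridA' u : ((u, r) \in hybrid A') = (u == a).
Proof.
by rewrite !inE allocated_setU1 /= eqxx xpair_eqE eqxx andbT (negbTE (notin_A u)) andbF !orbF.
Qed.

Let in_hybridA u : ((u, r) \in hybrid A) = (u == w).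
Proof. by rewrite inE (negbTE (notin_A u)) owner free andbT. Qed.

Lemma hybrid_owner_picks : a = w -> hybrid A' = hybrid A.
Proof.
move=> aw; apply/setP => -[u r']; have [->|r'r] := eqVneq r' r; last exact: in_hybrid.
by rewrite in_hybridA' in_hybridA aw.
Qed.

Lemma hybrid_other u : u != a -> u != w -> Su (hybrid A') u = Su (hybrid A) u.
Proof.
move=> ua uw; apply/setP => r'; rewrite !mem_Su.
have [->|r'r] := eqVneq r' r; last exact: in_hybrid.
by rewrite in_hybridA' in_hybridA (negbTE ua) (negbTE uw).
Qed.

Lemma hybrid_picker : a != w ->
  Su (hybrid A') a = r |: Su (hybrid A) a /\ r \notin Su (hybrid A) a.
Proof.
move=> aw; split; last by rewrite mem_Su in_hybridA (negbTE aw).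
apply/setP => r'; rewrite in_setU1 !mem_Su.
by have [->|r'r] := eqVneq r' r; [rewrite in_hybridA' eqxx | exact: in_hybrid].
Qed.

Lemma hybrid_owner : a != w ->
  [/\ Su (hybrid A) w = r |: Su (hybrid A') w, r \notin Su (hybrid A') w
    & Su A w \subset Su (hybrid A') w].
Proof.
move=> aw; split.
- apply/setP => r'; rewrite in_setU1 !mem_Su.
  by have [->|r'r] := eqVneq r' r; [rewrite in_hybridA eqxx | rewrite in_hybrid].
- by rewrite mem_Su in_hybridA' eq_sym (negbTE aw).
- by apply/subsetP => r'; rewrite !mem_Su !inE => ->; rewrite !orbT.
Qed.

(* Exchange step: if M >= 1 bounds the key c_a + x, and x rho^a_r bounds the
   marginal gain of every other user, then moving r to a in the hybrid costs
   at most (M - 1) rho^a_r: a gains >= (1 - c_a) rho^a_r, w loses <= x rho^a_r. *)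
Lemma hybrid_step (x M : R) : 1 <= M -> curvature Z a + x <= M ->
  (forall u, u != a -> rho Z A u r <= x * rho Z A a r) ->
  ZZ Z (hybrid A) - (M - 1) * rho Z A a r <= ZZ Z (hybrid A').
Proof.
move=> M1 keyM others; have rho0 := rho_ge0 hmono A a r.
have [aw | aw] := eqVneq a w.
  by rewrite hybrid_owner_picks // lerBlDr lerDl mulr_ge0 // subr_ge0.
have [pickE r_out] := hybrid_picker aw.
have [ownE r_out' sub_own] := hybrid_owner aw.
have gain : (1 - curvature Z a) * rho Z A a r
    <= Z a (Su (hybrid A') a) - Z a (Su (hybrid A) a).
  rewrite pickE; apply: le_trans (curvature_marg hmono hnorm _ r_out).
  by rewrite ler_wpM2l ?subr_ge0 ?curvature_le1 ?rho_le_single.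
have loss : - (x * rho Z A a r) <= Z w (Su (hybrid A') w) - Z w (Su (hybrid A) w).
  have := @hsub w _ _ r sub_own r_out'; have := others w; rewrite eq_sym aw /rho ownE; lra.
have : ZZ Z (hybrid A') - ZZ Z (hybrid A)
    = \sum_u (Z u (Su (hybrid A') u) - Z u (Su (hybrid A) u)) by rewrite -sumrB.
rewrite (bigD1 a) //= (bigD1 w) 1?eq_sym //= big1 => [|u /andP [ua uw]]; last first.
  by rewrite hybrid_other // subrr.
nra.
Qed.

End HybridExchange.

Section GreedyGuarantee.
Variables (R : realFieldType) (U Res : finType) (Z : U -> {set Res} -> R).
Hypotheses (hmono : monotone_fun Z) (hsub : submodular_fun Z) (hnorm : normalized_fun Z).
Variables (idx : U * Res -> nat) (s : #|Res|.-tuple (U * Res)).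
Hypothesis hrun : greedyM_run Z idx s.
Variable Omega : {set U * Res}.
Hypothesis hOpart : is_partition Omega.

Local Notation n := #|Res|.

Lemma key_greedy (i : 'I_n) : exists2 x,
  inv_d Z (prefix s i) (tnth s i).1 (tnth s i).2 = Some x &
  key Z (prefix s i) (tnth s i) = Some (curvature Z (tnth s i).1 + x).
Proof.
have [free best _ _] := hrun i; have [x x_def _] := inv_d_greedy hmono best free.
by exists x => //; rewrite /key x_def.
Qed.

Lemma ZZ_prefixS (i : 'I_n) : ZZ Z (prefix s i.+1) =
  ZZ Z (prefix s i) + rho Z (prefix s i) (tnth s i).1 (tnth s i).2.
Proof.
rewrite prefixS; case: (tnth s i) => a r /=.
rewrite (@ZZ_change_one _ _ _ Z (prefix s i) _ a) => [|u ua]; last first.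
  by apply/setP => r'; rewrite !mem_Su !inE xpair_eqE (negbTE ua).
have -> // : Su ((a, r) |: prefix s i) a = r |: Su (prefix s i) a.
by apply/setP => r'; rewrite in_setU1 !mem_Su !inE xpair_eqE eqxx.
Qed.

Lemma ZZ_empty : ZZ Z set0 = 0.
Proof.
rewrite /ZZ big1 // => u _.
by have -> : Su (set0 : {set U * Res}) u = set0 by apply/setP => r; rewrite !inE.
Qed.

(* Telescoping the exchange step along the run: Z(Omega) <= M Z(G) for any
   M >= 1 bounding all keys. *)
Lemma greedy_ratio (M : R) : 1 <= M ->
  (forall (i : 'I_n) k, key Z (prefix s i) (tnth s i) = Some k -> k <= M) ->
  ZZ Z Omega <= M * ZZ Z [set x in s].
Proof.
move=> M1 keyM; pose H k := hybrid Omega (prefix s k).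
suff inv k : (k <= n)%N -> ZZ Z Omega <= ZZ Z (H k) + (M - 1) * ZZ Z (prefix s k).
  move: (inv n (leqnn n)); rewrite /H hybrid_full; last exact: prefixn_allocated hrun.
  by rewrite prefixn => le; apply: (le_trans le); lra.
elim: k => [_|k IH lt_kn]; first by rewrite /H prefix0 hybrid_empty ZZ_empty mulr0 addr0.
pose i := Ordinal lt_kn.
have [free best _ _] := hrun i; have [x x_def others] := inv_d_greedy hmono best free.
have [w owner] := partition_owner (tnth s i).2 hOpart.
have keyi : curvature Z (tnth s i).1 + x <= M by apply: (keyM i); rewrite /key x_def.
have := hybrid_step hmono hsub hnorm free owner M1 keyi others.
rewrite -surjective_pairing -prefixS /= => step.
have := ZZ_prefixS i; have := IH (ltnW lt_kn); rewrite /H /=; nra.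
Qed.

End GreedyGuarantee.

Lemma greedy_bound_ratio (R : realFieldType) (K zG zO : R) :
  0 < zO -> 0 <= K -> zO <= Num.max K 1 * zG -> greedy_bound (Some K) <= zG / zO.
Proof.
move=> zO_pos K0 le_zO; rewrite /= ler_pdivlMr //.
have [K_le1 | K_gt1] := leP K 1.
  move: le_zO; rewrite (max_r K_le1) mul1r => le_zO.
  case: eqP => _; first by rewrite mul1r.
  by apply: le_trans _ le_zO; rewrite ler_piMl ?(ltW zO_pos) // ge_min lexx.
have K_pos : 0 < K := lt_trans ltr01 K_gt1.
move: le_zO; rewrite (max_l (ltW K_gt1)) (gt_eqF K_pos) => le_zO.
apply: (@le_trans _ _ (zO / K)); first by rewrite mulrC ler_wpM2l ?(ltW zO_pos) // ge_min lexx orbT.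
by rewrite ler_pdivrMr // mulrC.
Qed.

Unset Implicit Arguments. Set Strict Implicit.
Theorem theorem4 (R : realFieldType) (U Res : finType)
    (Z : U -> {set Res} -> R)
    (hmono : monotone_fun Z) (hsub : submodular_fun Z) (hnorm : normalized_fun Z)
    (hm : (1 < #|U|)%N)
    (idx : U * Res -> nat) (hidx : injective idx)
    (s : #|Res|.-tuple (U * Res)) (hrun : greedyM_run Z idx s)
    (Omega : {set U * Res}) (hOpart : is_partition Omega)
    (hOopt : forall P : {set U * Res}, is_partition P -> ZZ Z P <= ZZ Z Omega)
    (hpos : 0 < ZZ Z Omega) :
  greedy_bound (max_key Z s) <= ZZ Z [set x in s] / ZZ Z Omega.
Proof.
pose k (i : 'I_#|Res|) := odflt 0 (key Z (prefix s i) (tnth s i)).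
have keyE (i : 'I_#|Res|) : key Z (prefix s i) (tnth s i) = Some (k i).
  by have [x _] := key_greedy hmono hrun i; rewrite /k => ->.
set K := \big[Num.max/0]_(i < #|Res|) k i.
have maxE : max_key Z s = Some K.
  rewrite /max_key /K; apply: (big_ind2 (fun a b => a = Some b)) => // a1 b1 a2 b2 -> ->.
  by rewrite /emax /=; case: leP.
have K0 : 0 <= K by rewrite /K; elim/big_rec: _ => // i y _ y0; rewrite le_max y0 orbT.
rewrite maxE; apply: greedy_bound_ratio => //.
apply: (greedy_ratio hmono hsub hnorm hrun hOpart) => [|i x]; first by rewrite le_max lexx orbT.
by rewrite keyE => -[<-]; apply: le_trans (le_bigmax 0 k i) _; rewrite le_max lexx.
Qed.
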